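(* Let $\beta$ be any partition, with conjugate $\beta' = (\beta'_1,\beta'_2,\dots)$, and let $k \geq \beta'_1$ (that is, $k$ is at least the number of parts of $\beta$). Let $\lambda = (k, \beta'_1, \beta'_2, \dots)$, a partition of $k+|\beta|$. Then $$s_\beta(1,q,\dots,q^{k-1}) = q^{-\binom{|\beta|+1}{2}} f_{\lambda,|\beta|}(q),$$ i.e. the principal specialization $s_\beta(1,q,\dots,q^{k-1})$ is, up to a power of $q$, the distribution of the major index over all standard Young tableaux of shape $\lambda$ having the maximum possible number $|\beta|$ of descents.
   Context: For a partition $\lambda\vdash N$, a standard Young tableau of shape $\lambda$ is a filling of the Ferrers diagram with $1,\dots,N$, increasing along rows and down columns; it has a descent at $m$ if $m+1$ lies in a strictly lower row than $m$; $\mathrm{des}$ is the number of descents and $\mathrm{maj}$ their sum. $f_{\lambda,i}(q)=\sum q^{\mathrm{maj}(\tau)}$ over standard Young tableaux of shape $\lambda$ with $\mathrm{des}(\tau)=i$. The conjugate $\beta'$ has $\beta'_c$ equal to the number of parts of $\beta$ that are $\ge c$. $s_\beta(x_1,\dots,x_m)$ is the Schur polynomial, the sum of $x^T$ over semistandard Young tableaux $T$ of shape $\beta$ with entries in $\{1,\dots,m\}$. *)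

From HB Require Import structures.
From mathcomp Require Import all_boot all_order all_algebra.
Set Implicit Arguments. Unset Strict Implicit. Unset Printing Implicit Defensive.
Import GRing.Theory.
Local Open Scope ring_scope.

Definition is_partition (l : seq nat) : bool :=
  sorted geq l && all (fun p => 0 < p)%N l.

Definition conj_part (b : seq nat) : seq nat :=
  [seq count (fun p => c <= p)%N b | c <- iota 1 (head 0%N b)].

(* Cells of the Ferrers diagram of l: (row, column), 0-based. *)
Definition cells (l : seq nat) : predArgType :=
  {c : 'I_(size l) * 'I_(head 0%N l) | (c.2 < nth 0%N l c.1)%N}.

Definition crow (l : seq nat) (c : cells l) : nat := (val c).1.
Definition ccol (l : seq nat) (c : cells l) : nat := (val c).2.

(* Standard Young tableau of shape l, entries 0..N-1 standing for 1..N
   (N = |l|): an injective filling of the cells (hence a bijection onto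
   {1..N} since #cells = N), increasing along rows and down columns. *)
Definition is_syt (l : seq nat) (T : {ffun cells l -> 'I_(sumn l)}) : bool :=
  injectiveb T &&
  [forall c, forall d,
     ((crow c == crow d) && (ccol c < ccol d)%N ==> (T c < T d)%N) &&
     ((ccol c == ccol d) && (crow c < crow d)%N ==> (T c < T d)%N)].

(* Entry v (i.e. the number v+1) is a descent: v+2 lies in a strictly lower row
   than v+1. The descent is then at m = v+1. *)
Definition is_descent (l : seq nat) (T : {ffun cells l -> 'I_(sumn l)}) (v : nat) : bool :=
  [exists c, exists d,
     [&& nat_of_ord (T c) == v, nat_of_ord (T d) == v.+1 & (crow c < crow d)%N]].

Definition des (l : seq nat) (T : {ffun cells l -> 'I_(sumn l)}) : nat :=
  #|[pred v : 'I_(sumn l) | is_descent T v]|.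

Definition maj (l : seq nat) (T : {ffun cells l -> 'I_(sumn l)}) : nat :=
  (\sum_(v < sumn l | is_descent T v) v.+1)%N.

Definition f_poly (l : seq nat) (i : nat) : {poly int} :=
  \sum_(T : {ffun cells l -> 'I_(sumn l)} | is_syt T && (des T == i)) 'X^(maj T).

(* Semistandard Young tableau of shape b with entries in {1..m}
   (entry j : 'I_m stands for j+1): rows weakly increase, columns strictly. *)
Definition is_ssyt (b : seq nat) (m : nat) (T : {ffun cells b -> 'I_m}) : bool :=
  [forall c, forall d,
     ((crow c == crow d) && (ccol c < ccol d)%N ==> (T c <= T d)%N) &&
     ((ccol c == ccol d) && (crow c < crow d)%N ==> (T c < T d)%N)].

(* Schur polynomial s_b(x_1,..,x_m) evaluated at x_{j+1} = x j. *)
Definition schur_eval (R : comNzRingType) (b : seq nat) (m : nat) (x : 'I_m -> R) : R :=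
  \sum_(T : {ffun cells b -> 'I_m} | is_ssyt T) \prod_(c : cells b) x (T c).

From HB Require Import structures.
From mathcomp Require Import all_boot all_order all_algebra.
From mathcomp Require Import zify.
Set Implicit Arguments. Unset Strict Implicit. Unset Printing Implicit Defensive.
Import GRing.Theory.

(* Given a semistandard tableau T of shape
   beta with entries in {0, .., k-1}, give each cell of lambda a letter: j to
   the cell (0, j) of the first row, and T(r, c) to the cell (c + 1, r), the
   transpose of (r, c) shifted one row down.  Numbering the cells of lambda in
   the lexicographic order of (letter, row) gives a standard tableau in which
   the entry before any entry outside the first row lies in a higher row, so
   its n = |beta| entries outside the first row are exactly the descent tops.
   The entry of the cell (c + 1, r) is T(r, c) + 1 plus the rank of (r, c)
   among the cells of beta, whence maj = |T| + binom(n + 1, 2).  Conversely, in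
   a standard tableau with n descents every entry outside the first row is a
   descent top, which forces the numbering to follow the order of
   (letter, row), the letter of a cell being the number of first-row entries
   not exceeding it, minus one. *)

Lemma geq_trans : transitive geq.
Proof. by move=> m n p /= le_mn le_np; apply: leq_trans le_np le_mn. Qed.

Lemma nth_sorted_geq_head s i : sorted geq s -> nth 0 s i <= head 0 s.
Proof.
move=> s_sorted; case: (ltnP i (size s)) => [lt_i_s|?]; last by rewrite nth_default.
rewrite -nth0; apply: (sorted_leq_nth geq_trans leqnn) => //.
by rewrite inE (leq_ltn_trans _ lt_i_s).
Qed.

Lemma ltn_count_sorted s i j : sorted geq s ->
  (j < count (fun p => i < p) s) = (i < nth 0 s j).
Proof.
elim: s j => [|a s IHs] j /=; first by rewrite nth_nil.
move=> a_s_sorted; have s_sorted := path_sorted a_s_sorted.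
case: (ltnP i a) => [lt_i_a|le_a_i] /=; first by case: j => [|j] //=; rewrite add1n ltnS IHs.
have -> : count (fun p => i < p) s = 0.
  apply/eqP; rewrite -leqn0 leqNgt -has_count; apply/hasPn => p p_s.
  by rewrite -leqNgt (leq_trans _ le_a_i) //; apply: (allP (order_path_min geq_trans a_s_sorted)).
by rewrite ltn0 ltnNge (leq_trans (@nth_sorted_geq_head (a :: s) j a_s_sorted)).
Qed.

Lemma size_conj_part b : size (conj_part b) = head 0 b.
Proof. by rewrite size_map size_iota. Qed.

Lemma nth_conj_part b i : sorted geq b -> nth 0 (conj_part b) i = count (fun p => i < p) b.
Proof.
move=> b_sorted; case: (ltnP i (head 0 b)) => [lt_i_b|le_b_i].
  by rewrite (nth_map 0) ?size_iota // nth_iota.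
rewrite nth_default ?size_conj_part //; apply/esym/eqP.
rewrite -leqn0 leqNgt (ltn_count_sorted _ 0 b_sorted) -leqNgt nth0.
by case: b b_sorted le_b_i.
Qed.

Lemma head_conj_part b : is_partition b -> nth 0 (conj_part b) 0 = size b.
Proof.
case/andP=> b_sorted b_pos; rewrite nth_conj_part // -count_predT.
by apply: eq_in_count => p /(allP b_pos).
Qed.

Lemma card_cells l : (forall r, nth 0 l r <= head 0 l) -> #|cells l| = sumn l.
Proof.
move=> le_row_head; rewrite card_sig -sum1_card.
rewrite (eq_bigl (fun c : 'I_(size l) * 'I_(head 0 l) => c.2 < nth 0 l c.1)) //.
rewrite -(pair_big_dep xpredT (fun (i : 'I_(size l)) (j : 'I_(head 0 l)) => j < nth 0 l i)
                       (fun _ _ => 1)) /=.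
rewrite sumnE (big_nth 0) big_mkord; apply: eq_bigr => i _.
rewrite (eq_bigl (fun j : 'I_(head 0 l) => true && (j < nth 0 l i))) //.
by rewrite (big_ord_narrow_cond (le_row_head i)) /= sum1_card card_ord.
Qed.

Lemma card_ord_ltn n m : m <= n -> #|[pred i : 'I_n | i < m]| = m.
Proof.
move=> le_mn; rewrite -sum1_card (eq_bigl (fun i : 'I_n => true && (i < m))) //.
by rewrite (big_ord_narrow_cond le_mn) /= sum1_card card_ord.
Qed.

Definition ord_prev n (i : 'I_n) : 'I_n := Ordinal (leq_ltn_trans (leq_pred i) (ltn_ord i)).

Definition lexcode (M a b : nat) := a * M + b.

Lemma ltn_lexcode M a b a' b' : b < M -> b' < M ->
  (lexcode M a b < lexcode M a' b') = (a < a') || (a == a') && (b < b').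
Proof.
rewrite /lexcode => lt_bM lt_b'M; case: (ltngtP a a') => [lt_aa'|lt_a'a|->] /=.
- by apply/idP; nia.
- by apply/negbTE; rewrite -leqNgt; nia.
- by rewrite ltn_add2l.
Qed.

Lemma lexcode_inj M a b a' b' : b < M -> b' < M ->
  lexcode M a b = lexcode M a' b' -> a = a' /\ b = b'.
Proof.
move=> lt_bM lt_b'M eq_code.
have pos_M : 0 < M by apply: leq_ltn_trans lt_bM.
have := congr1 (divn^~ M) eq_code; have := congr1 (modn^~ M) eq_code.
by rewrite /lexcode !modnMDl !divnMDl // !modn_small // !divn_small // !addn0.
Qed.

Section Rank.
Variables (X : finType) (key : X -> nat).

Definition rank x := #|[pred y | key y < key x]|.

Lemma rank_lt_card x : rank x < #|X|.
Proof.
apply: (@leq_ltn_trans #|predC1 x|).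
  by apply/subset_leq_card/subsetP => y; rewrite !inE; apply: contraTneq => ->; rewrite ltnn.
by rewrite cardC1 prednK //; apply/card_gt0P; exists x.
Qed.

Lemma rank_lt x y : key x < key y -> rank x < rank y.
Proof.
move=> lt_xy; apply: proper_card; apply/properP; split; last by exists x; rewrite !inE ?ltnn.
by apply/subsetP => z; rewrite !inE => /ltn_trans; apply.
Qed.

Hypothesis key_inj : injective key.

Lemma ltn_rank x y : (rank x < rank y) = (key x < key y).
Proof.
apply/idP/idP => [lt_rank|/rank_lt //].
case: (ltngtP (key x) (key y)) => // [/rank_lt|/key_inj eq_xy].
  by rewrite ltnNge (ltnW lt_rank).
by move: lt_rank; rewrite eq_xy ltnn.
Qed.

Lemma rank_inj : injective rank.
Proof.
move=> x y eq_rank; apply: key_inj.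
by case: (ltngtP (key x) (key y)) => // /rank_lt; rewrite eq_rank ltnn.
Qed.

Lemma sum_rank : \sum_x rank x = 'C(#|X|, 2).
Proof.
pose r x : 'I_#|X| := Ordinal (rank_lt_card x).
have r_bij : bijective r by apply: inj_card_bij; [move=> x y [/rank_inj] | rewrite card_ord].
rewrite -bin2_sum big_mkord (reindex r) //=; exact: onW_bij.
Qed.

End Rank.

Lemma rank_ord (X : finType) m (S : X -> 'I_m) x :
  injective S -> #|X| = m -> rank S x = S x.
Proof.
move=> S_inj card_X.
have [S' _ S'K] := inj_card_bij S_inj (eq_leq (etrans (card_ord m) (esym card_X))).
rewrite /rank -(card_image S_inj) -[X in _ = X](card_ord_ltn (ltnW (ltn_ord (S x)))).
apply: eq_card => i; apply/imageP/idP => [[y y_lt ->] //|lt_i].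
by exists (S' i); rewrite ?inE S'K.
Qed.

Definition cell_of l r c (lt_r : r < size l) (lt_c : c < head 0 l) (in_row : c < nth 0 l r) :
  cells l := exist (fun rc : 'I_(size l) * 'I_(head 0 l) => rc.2 < nth 0 l rc.1)
                   (Ordinal lt_r, Ordinal lt_c) in_row.

Lemma cell_eq l (c d : cells l) : crow c = crow d -> ccol c = ccol d -> c = d.
Proof.
case: c d => [[r s] ?] [[r' s'] ?]; rewrite /crow /ccol /= => eq_r eq_s.
by apply: val_inj; congr pair; apply: val_inj.
Qed.

Lemma crow_lt l (c : cells l) : crow c < size l. Proof. exact: ltn_ord. Qed.
Lemma ccol_lt l (c : cells l) : ccol c < head 0 l. Proof. exact: ltn_ord. Qed.
Lemma ccol_lt_row l (c : cells l) : ccol c < nth 0 l (crow c). Proof. exact: valP c. Qed.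

Section TableauRules.
Variable l : seq nat.
Implicit Types c d : cells l.

Lemma syt_inj (S : {ffun cells l -> 'I_(sumn l)}) : is_syt S -> injective S.
Proof. by case/andP=> /injectiveP. Qed.

Lemma syt_row_lt (S : {ffun cells l -> 'I_(sumn l)}) c d :
  is_syt S -> crow c = crow d -> ccol c < ccol d -> S c < S d.
Proof.
case/andP=> _ /forallP/(_ c)/forallP/(_ d)/andP[/implyP S_row _] eq_r lt_s.
by apply: S_row; rewrite eq_r eqxx.
Qed.

Lemma syt_col_lt (S : {ffun cells l -> 'I_(sumn l)}) c d :
  is_syt S -> ccol c = ccol d -> crow c < crow d -> S c < S d.
Proof.
case/andP=> _ /forallP/(_ c)/forallP/(_ d)/andP[_ /implyP S_col] eq_s lt_r.
by apply: S_col; rewrite eq_s eqxx.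
Qed.

Lemma ssyt_row_le m (T : {ffun cells l -> 'I_m}) c d :
  is_ssyt T -> crow c = crow d -> ccol c < ccol d -> T c <= T d.
Proof.
move=> /forallP/(_ c)/forallP/(_ d)/andP[/implyP T_row _] eq_r lt_s.
by apply: T_row; rewrite eq_r eqxx.
Qed.

Lemma ssyt_col_lt m (T : {ffun cells l -> 'I_m}) c d :
  is_ssyt T -> ccol c = ccol d -> crow c < crow d -> T c < T d.
Proof.
move=> /forallP/(_ c)/forallP/(_ d)/andP[_ /implyP T_col] eq_s lt_r.
by apply: T_col; rewrite eq_s eqxx.
Qed.

Lemma ssyt_crow_le m (T : {ffun cells l -> 'I_m}) c :
  is_partition l -> is_ssyt T -> crow c <= T c.
Proof.
case/andP=> _ l_pos T_ssyt; have [r r_c] : exists r, crow c = r by exists (crow c).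
elim: r c r_c => [|r IHr] c r_c; first by rewrite r_c.
have pos_l : 0 < head 0 l by apply: leq_ltn_trans (ccol_lt c).
have pos_row r' (lt_r' : r' < size l) : 0 < nth 0 l r' by apply: (all_nthP 0 l_pos).
have lt_r : r < size l by apply: ltnW; rewrite -r_c crow_lt.
pose c0 := cell_of (crow_lt c) pos_l (pos_row _ (crow_lt c)).
pose d := cell_of lt_r pos_l (pos_row _ lt_r).
have le_c0_c : T c0 <= T c.
  case: (posnP (ccol c)) => [s_c|s_pos]; last exact: (ssyt_row_le T_ssyt).
  by rewrite (@cell_eq l c0 c).
have lt_d_c0 : T d < T c0 by apply: (ssyt_col_lt T_ssyt) => //; rewrite /crow /= -/(crow c) r_c.
by rewrite r_c (leq_ltn_trans (IHr d _) (leq_trans lt_d_c0 le_c0_c)).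
Qed.

End TableauRules.

Section Bijection.
Variables (beta : seq nat) (k : nat).
Hypotheses (beta_part : is_partition beta) (k_ge_rows : nth 0 (conj_part beta) 0 <= k).

Local Notation lam := (k :: conj_part beta).
Local Notation N := (sumn lam).
Local Notation n := (sumn beta).
Local Notation CL := (cells lam).
Local Notation CB := (cells beta).
Local Notation M := (size lam).

Let beta_sorted : sorted geq beta := (andP beta_part).1.

Lemma size_beta_le_k : size beta <= k.
Proof. by rewrite -head_conj_part. Qed.

Lemma nth_lam_succ i : nth 0 lam i.+1 = count (fun p => i < p) beta.
Proof. exact: nth_conj_part. Qed.

Lemma card_cells_lam : #|CL| = N.
Proof.
apply: card_cells; case=> [|i] //=; rewrite (leq_trans _ k_ge_rows) //.
by rewrite !nth_conj_part //; apply: sub_count => p; apply: leq_ltn_trans.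
Qed.

Lemma card_cells_beta : #|CB| = n.
Proof. by apply: card_cells => r; apply: nth_sorted_geq_head. Qed.

Definition row0_cell (j : 'I_k) : CL := @cell_of lam 0 j (ltn0Sn _) (ltn_ord j) (ltn_ord j).

Lemma tr_cell_row_lt (x : CB) : (ccol x).+1 < M.
Proof. by rewrite /= ltnS size_conj_part ccol_lt. Qed.

Lemma tr_cell_col_lt (x : CB) : crow x < k.
Proof. exact: leq_trans (crow_lt x) size_beta_le_k. Qed.

Lemma tr_cell_in_row (x : CB) : crow x < nth 0 lam (ccol x).+1.
Proof. by rewrite nth_lam_succ ltn_count_sorted // ccol_lt_row. Qed.

Definition tr_cell (x : CB) : CL :=
  cell_of (tr_cell_row_lt x) (tr_cell_col_lt x) (tr_cell_in_row x).

Lemma crow_row0_cell j : crow (row0_cell j) = 0. Proof. by []. Qed.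
Lemma ccol_row0_cell j : ccol (row0_cell j) = j. Proof. by []. Qed.
Lemma crow_tr_cell x : crow (tr_cell x) = (ccol x).+1. Proof. by []. Qed.
Lemma ccol_tr_cell x : ccol (tr_cell x) = crow x. Proof. by []. Qed.

Definition cell_of_sum (s : 'I_k + CB) : CL :=
  match s with inl j => row0_cell j | inr x => tr_cell x end.

Lemma cell_of_sum_inj : injective cell_of_sum.
Proof.
have eq_cells c d : c = d -> crow c = crow d /\ ccol c = ccol d by move->.
move=> [j|x] [j'|x'] /eq_cells /= [eq_r eq_s] //; congr (_ _).
- exact: val_inj.
- by apply: cell_eq => //; apply: succn_inj.
Qed.

Lemma tr_cell_inj : injective tr_cell.
Proof. by move=> x y /(@cell_of_sum_inj (inr x) (inr y)) [->]. Qed.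

Variant cell_spec (c : CL) : Prop :=
  | Row0Cell j of c = row0_cell j
  | TrCell x of c = tr_cell x.

Lemma cellP c : cell_spec c.
Proof.
case r_c: (crow c) => [|i]; first by apply: (@Row0Cell _ (Ordinal (ccol_lt c))); apply: cell_eq.
have lt_i : i < head 0 beta by rewrite -ltnS -size_conj_part -r_c crow_lt.
have in_row : i < nth 0 beta (ccol c).
  by rewrite -(ltn_count_sorted i _ beta_sorted) -nth_lam_succ -r_c ccol_lt_row.
have lt_s : ccol c < size beta.
  by rewrite (leq_trans _ (count_size (fun p => i < p) beta)) // -nth_lam_succ -r_c ccol_lt_row.
by apply: (@TrCell _ (cell_of lt_s lt_i in_row)); apply: cell_eq.
Qed.

Lemma cell_of_sum_bij : bijective cell_of_sum.
Proof.
apply: inj_card_bij cell_of_sum_inj _; rewrite -(card_codom cell_of_sum_inj).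
apply/subset_leq_card/subsetP => c _.
by case: (cellP c) => [j|x] ->; [apply: (codom_f _ (inl _ j)) | apply: (codom_f _ (inr _ x))].
Qed.

Lemma sum_cells_lam (F : CL -> nat) :
  \sum_c F c = \sum_(j < k) F (row0_cell j) + \sum_x F (tr_cell x).
Proof. by rewrite (reindex cell_of_sum) ?big_sumType //; apply: onW_bij cell_of_sum_bij. Qed.

Lemma card_cells_lam_pred (P : pred CL) :
  #|P| = #|[pred j : 'I_k | P (row0_cell j)]| + #|[pred x : CB | P (tr_cell x)]|.
Proof.
have card_sum1 (X : finType) (Q : pred X) : #|Q| = \sum_x (Q x : nat).
  by rewrite -sum1_card big_mkcond; apply: eq_bigr => x _; rewrite unfold_in; case: (Q x).
by rewrite !card_sum1 sum_cells_lam.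
Qed.

Lemma card_lower_cells : #|[pred c : CL | crow c != 0]| = n.
Proof. by rewrite card_cells_lam_pred /= card0 -card_cells_beta; apply: eq_card. Qed.

Section StandardTableau.
Variable S : {ffun CL -> 'I_N}.

Definition row0_count c := #|[pred j : 'I_k | S (row0_cell j) <= S c]|.

Lemma row0_count_mono c d : S c <= S d -> row0_count c <= row0_count d.
Proof.
move=> le_cd; apply/subset_leq_card/subsetP => j; rewrite !inE => le_jc.
exact: leq_trans le_jc le_cd.
Qed.

Lemma row0_count_pred_lt x : (row0_count (tr_cell x)).-1 < k.
Proof.
have pos_k : 0 < k by apply: leq_ltn_trans (tr_cell_col_lt x).
by rewrite -(ltn_predK pos_k) ltnS -!subn1 leq_sub2r // -[leqRHS]card_ord max_card.
Qed.

Hypothesis S_syt : is_syt S.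

Lemma row0_count_row0_cell j : row0_count (row0_cell j) = j.+1.
Proof.
rewrite /row0_count -(card_ord_ltn (ltn_ord j)); apply: eq_card => j' /=.
rewrite !inE ltnS; case: (ltngtP j' j) => [lt_j'j|lt_jj'|/val_inj ->].
- by rewrite ltnW // (syt_row_lt S_syt).
- by rewrite leqNgt (syt_row_lt S_syt).
- by rewrite leqnn.
Qed.

Lemma row0_count_pos c : 0 < row0_count c.
Proof.
case: (cellP c) => [j|x] ->; first by rewrite row0_count_row0_cell.
apply/card_gt0P; exists (Ordinal (tr_cell_col_lt x)); rewrite inE ltnW //.
exact: (syt_col_lt S_syt).
Qed.

Hypothesis S_des : des S = n.

(* There are n descents and each one ends at an entry outside row 0, while
   there are only n such entries: so each of them ends a descent. *)
Lemma syt_prev_higher d : crow d != 0 -> exists2 c, (S c).+1 = S d & crow c < crow d.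
Proof.
pose E := [set d : CL | (crow d != 0) && [exists c, ((S c).+1 == S d) && (crow c < crow d)]].
pose L := [set d : CL | crow d != 0].
have sub_EL : E \subset L by apply/subsetP => e; rewrite !inE => /andP[].
have desc_E : [set v : 'I_N | is_descent S v] \subset [set ord_prev (S e) | e in E].
  apply/subsetP => v; rewrite inE => /existsP[c /existsP[e /and3P[/eqP Sc /eqP Se lt_ce]]].
  apply/imsetP; exists e; last by apply: val_inj; rewrite /= Se.
  rewrite inE -lt0n (leq_ltn_trans _ lt_ce) //=; apply/existsP; exists c.
  by rewrite Sc Se eqxx.
have E_L : E = L.
  apply/eqP; rewrite eqEcard sub_EL cardsE card_lower_cells -S_des /des.
  rewrite -[#|pred_of_simpl _|]cardsE.
  exact: leq_trans (subset_leq_card desc_E) (leq_imset_card _ _).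
move=> d_lower; have : d \in E by rewrite E_L inE.
by rewrite inE => /andP[_ /existsP[c /andP[/eqP Sc lt_cd]]]; exists c.
Qed.

(* Strong induction on S d: a row-0 cell d has a larger row-0 count than every
   earlier cell, and any other d is preceded by a higher cell of no larger count. *)
Lemma syt_key_mono c d : S c < S d ->
  lexcode M (row0_count c) (crow c) < lexcode M (row0_count d) (crow d).
Proof.
have [m Sd_m] : exists m, S d = m :> nat by exists (S d).
rewrite Sd_m; elim/ltn_ind: m d Sd_m c => m IHm d Sd_m c lt_cm.
case: (cellP d) => [j|x] d_eq.
  rewrite ltn_lexcode ?crow_lt // (_ : row0_count c < row0_count d) //.
  apply: proper_card; apply/properP; split.
    by apply/subsetP => j'; rewrite !inE => le_j'c; rewrite (leq_trans le_j'c) // Sd_m ltnW.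
  by exists j; rewrite !inE -d_eq ?leqnn // -ltnNge Sd_m.
have [e Se_d lt_ed] : exists2 e, (S e).+1 = S d & crow e < crow d.
  by apply: syt_prev_higher; rewrite d_eq crow_tr_cell.
have key_ed : lexcode M (row0_count e) (crow e) < lexcode M (row0_count d) (crow d).
  rewrite ltn_lexcode ?crow_lt // lt_ed andbT orbC -leq_eqVlt.
  by apply: row0_count_mono; rewrite -ltnS Se_d.
case: (ltngtP (S c) (S e)) => [lt_ce|lt_ec|/val_inj/(syt_inj S_syt) -> //].
  by apply: ltn_trans key_ed; apply: IHm (S e) _ _ erefl _ lt_ce; rewrite -Sd_m -Se_d.
by move: lt_cm; rewrite -Sd_m -Se_d ltnS leqNgt lt_ec.
Qed.

End StandardTableau.

Definition ssyt_of_syt (S : {ffun CL -> 'I_N}) : {ffun CB -> 'I_k} :=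
  [ffun x => Ordinal (row0_count_pred_lt S x)].

Lemma ssyt_of_syt_val S x : ssyt_of_syt S x = (row0_count S (tr_cell x)).-1 :> nat.
Proof. by rewrite ffunE. Qed.

Definition cell_letter (T : {ffun CB -> 'I_k}) (c : CL) : nat :=
  if [pick x | tr_cell x == c] is Some x then T x else ccol c.

Definition ssyt_key T c := lexcode M (cell_letter T c) (crow c).

Lemma cell_letter_row0 T j : cell_letter T (row0_cell j) = j.
Proof.
rewrite /cell_letter; case: pickP => [x /eqP tr_x|//].
by move: (congr1 (@crow _) tr_x); rewrite crow_tr_cell.
Qed.

Lemma cell_letter_tr T x : cell_letter T (tr_cell x) = T x.
Proof.
by rewrite /cell_letter; case: pickP => [y /eqP/tr_cell_inj -> // | /(_ x)]; rewrite eqxx.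
Qed.

Lemma ssyt_key_row0_tr T j x : (ssyt_key T (row0_cell j) < ssyt_key T (tr_cell x)) = (j <= T x).
Proof.
rewrite /ssyt_key ltn_lexcode ?crow_lt // cell_letter_row0 cell_letter_tr.
by rewrite andbT orbC -leq_eqVlt.
Qed.

Lemma rank_ssyt_key_lt T c : rank (ssyt_key T) c < N.
Proof. by rewrite -card_cells_lam rank_lt_card. Qed.

Definition syt_of_ssyt T : {ffun CL -> 'I_N} := [ffun c => Ordinal (rank_ssyt_key_lt T c)].

Lemma syt_of_ssyt_val T c : syt_of_ssyt T c = rank (ssyt_key T) c :> nat.
Proof. by rewrite ffunE. Qed.

Section SemistandardTableau.
Variable T : {ffun CB -> 'I_k}.
Hypothesis T_ssyt : is_ssyt T.

Local Notation key := (ssyt_key T).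
Local Notation R := (syt_of_ssyt T).

Lemma ssyt_key_inj : injective key.
Proof.
move=> c d /(lexcode_inj (crow_lt c) (crow_lt d)) [].
case: (cellP c) => [j|x] ->; case: (cellP d) => [j'|y] ->;
  rewrite ?cell_letter_row0 ?cell_letter_tr ?crow_row0_cell ?crow_tr_cell //.
  by move/val_inj ->.
move=> eq_T [eq_s]; congr tr_cell; apply: cell_eq => //.
case: (ltngtP (crow x) (crow y)) => // [lt_xy|lt_yx].
  by have := ssyt_col_lt T_ssyt eq_s lt_xy; rewrite eq_T ltnn.
by have := ssyt_col_lt T_ssyt (esym eq_s) lt_yx; rewrite eq_T ltnn.
Qed.

Lemma ssyt_key_row_lt c d : crow c = crow d -> ccol c < ccol d -> key c < key d.
Proof.
rewrite /ssyt_key ltn_lexcode ?crow_lt // => eq_r lt_s; apply/orP; left.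
move: eq_r lt_s; case: (cellP c) => [j|x] ->; case: (cellP d) => [j'|y] ->;
  rewrite ?cell_letter_row0 ?cell_letter_tr ?crow_row0_cell ?crow_tr_cell //.
by rewrite !ccol_tr_cell => /succn_inj; apply: (ssyt_col_lt T_ssyt).
Qed.

Lemma ssyt_key_col_lt c d : ccol c = ccol d -> crow c < crow d -> key c < key d.
Proof.
rewrite /ssyt_key ltn_lexcode ?crow_lt // => eq_s lt_r.
rewrite lt_r andbT orbC -leq_eqVlt; move: eq_s lt_r.
case: (cellP c) => [j|x] ->; case: (cellP d) => [j'|y] ->;
  rewrite ?cell_letter_row0 ?cell_letter_tr ?crow_row0_cell ?crow_tr_cell //.
- by rewrite ccol_row0_cell ccol_tr_cell => -> _; apply: ssyt_crow_le.
- by rewrite !ccol_tr_cell ltnS; apply: (ssyt_row_le T_ssyt).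
Qed.

Lemma ltn_syt_of_ssyt c d : (R c < R d) = (key c < key d).
Proof. by rewrite !syt_of_ssyt_val ltn_rank //; apply: ssyt_key_inj. Qed.

Lemma syt_of_ssyt_inj : injective R.
Proof. by move=> c d /(congr1 val); rewrite /= !syt_of_ssyt_val => /(rank_inj ssyt_key_inj). Qed.

Lemma syt_of_ssyt_is_syt : is_syt R.
Proof.
apply/andP; split; first exact/injectiveP/syt_of_ssyt_inj.
apply/forallP => c; apply/forallP => d; rewrite !ltn_syt_of_ssyt.
by apply/andP; split; apply/implyP => /andP[/eqP eq_cd lt_cd];
  [apply: ssyt_key_row_lt | apply: ssyt_key_col_lt].
Qed.

Lemma syt_of_ssytK : ssyt_of_syt R = T.
Proof.
apply/ffunP => x; apply: val_inj; rewrite /= ssyt_of_syt_val /row0_count.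
rewrite (eq_card (B := [pred j : 'I_k | j < (T x).+1])) ?card_ord_ltn //= => j.
rewrite !inE ltnS -ssyt_key_row0_tr -ltn_syt_of_ssyt leq_eqVlt orb_idl // => /eqP.
by move/val_inj/syt_of_ssyt_inj/(@cell_of_sum_inj (inl j) (inr x)).
Qed.

Lemma syt_of_ssyt_lower_pos d : crow d != 0 -> 0 < R d.
Proof.
case: (cellP d) => [j|y] -> //= _.
by rewrite (leq_ltn_trans _ (_ : R (row0_cell (T y)) < _)) // ltn_syt_of_ssyt ssyt_key_row0_tr.
Qed.

(* The entry just before a cell d outside row 0 lies strictly higher: otherwise
   the row-0 cell carrying the letter of d would sit between them. *)
Lemma is_descent_syt_of_ssyt v :
  is_descent R v = [exists d, (crow d != 0) && (R d == v.+1 :> nat)].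
Proof.
apply/existsP/existsP => [[c /existsP[d /and3P[_ Rd lt_cd]]]|[d /andP[d_lower /eqP Rd]]].
  by exists d; rewrite Rd andbT -lt0n (leq_ltn_trans _ lt_cd).
have [R' RK R'K] : bijective R.
  by apply: inj_card_bij syt_of_ssyt_inj _; rewrite card_ord card_cells_lam.
pose c := R' (ord_prev (R d)).
have Rc : (R c).+1 = R d by rewrite R'K /= prednK // syt_of_ssyt_lower_pos.
have Rc_v : R c = v :> nat by apply: succn_inj; rewrite Rc Rd.
exists c; apply/existsP; exists d; rewrite Rc_v Rd !eqxx /= ltnNge; apply/negP => le_dc.
case: (cellP d) d_lower le_dc Rc => [j|y] -> //= _.
case: (cellP c) => [j|x] -> //; rewrite !crow_tr_cell ltnS => le_yx Rc.
have : key (tr_cell x) < key (tr_cell y) by rewrite -ltn_syt_of_ssyt -Rc.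
rewrite /ssyt_key ltn_lexcode ?crow_lt // !cell_letter_tr !crow_tr_cell ltnS.
rewrite [ccol x < _]ltnNge le_yx andbF orbF => lt_T.
have lt_xj : R (tr_cell x) < R (row0_cell (T y)).
  rewrite ltn_syt_of_ssyt /ssyt_key ltn_lexcode ?crow_lt //.
  by rewrite cell_letter_row0 cell_letter_tr lt_T.
have : R (row0_cell (T y)) < R (tr_cell y) by rewrite ltn_syt_of_ssyt ssyt_key_row0_tr.
by rewrite -Rc ltnS leqNgt lt_xj.
Qed.

Lemma descents_syt_of_ssyt :
  [set v : 'I_N | is_descent R v] = [set ord_prev (R d) | d in [set d : CL | crow d != 0]].
Proof.
apply/setP => v; rewrite inE is_descent_syt_of_ssyt; apply/existsP/imsetP.
  by case=> d /andP[d_lower /eqP Rd]; exists d; rewrite ?inE //; apply: val_inj; rewrite /= Rd.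
case=> d; rewrite inE => d_lower ->; exists d.
by rewrite d_lower /= prednK // syt_of_ssyt_lower_pos.
Qed.

Lemma ord_prev_syt_of_ssyt_inj :
  {in [set d : CL | crow d != 0] &, injective (fun d => ord_prev (R d))}.
Proof.
move=> c d; rewrite !inE => c_lower d_lower /(congr1 val) /= eq_pred.
apply/syt_of_ssyt_inj/val_inj => /=.
by rewrite -(prednK (syt_of_ssyt_lower_pos c_lower)) eq_pred prednK // syt_of_ssyt_lower_pos.
Qed.

Lemma des_syt_of_ssyt : des R = n.
Proof.
rewrite /des -cardsE descents_syt_of_ssyt card_in_imset ?cardsE ?card_lower_cells //.
exact: ord_prev_syt_of_ssyt_inj.
Qed.

Lemma syt_of_ssyt_tr x : R (tr_cell x) = (T x).+1 + rank (fun y => key (tr_cell y)) x :> nat.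
Proof.
rewrite syt_of_ssyt_val /rank card_cells_lam_pred; congr addn.
by rewrite -(card_ord_ltn (ltn_ord (T x))); apply: eq_card => j; rewrite !inE ssyt_key_row0_tr.
Qed.

Lemma maj_syt_of_ssyt : maj R = ('C(n.+1, 2) + \sum_x T x)%N.
Proof.
rewrite /maj (eq_bigl (fun v => v \in [set v : 'I_N | is_descent R v])); last first.
  by move=> v; rewrite inE.
rewrite descents_syt_of_ssyt big_imset /=; last exact: ord_prev_syt_of_ssyt_inj.
rewrite (eq_bigr (fun d => nat_of_ord (R d))) => [|d]; last first.
  by rewrite inE => /syt_of_ssyt_lower_pos/prednK.
rewrite big_mkcond sum_cells_lam big1 => [|j _]; last by rewrite inE.
rewrite add0n (eq_bigr (fun x => T x + 1 + rank (fun y => key (tr_cell y)) x)); last first.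
  by move=> x _; rewrite inE /= syt_of_ssyt_tr addn1.
rewrite !big_split /= sum_rank => [|x y /ssyt_key_inj/tr_cell_inj //].
by rewrite sum1_card card_cells_beta binS bin1; lia.
Qed.

End SemistandardTableau.

Section MaxDescentTableau.
Variable S : {ffun CL -> 'I_N}.
Hypotheses (S_syt : is_syt S) (S_des : des S = n).

Lemma ssyt_key_ssyt_of_syt c :
  ssyt_key (ssyt_of_syt S) c = lexcode M (row0_count S c).-1 (crow c).
Proof.
rewrite /ssyt_key; case: (cellP c) => [j|x] ->.
  by rewrite cell_letter_row0 row0_count_row0_cell.
by rewrite cell_letter_tr ssyt_of_syt_val.
Qed.

Lemma ssyt_key_ssyt_of_syt_lt c d :
  S c < S d -> ssyt_key (ssyt_of_syt S) c < ssyt_key (ssyt_of_syt S) d.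
Proof.
move=> lt_cd; rewrite !ssyt_key_ssyt_of_syt.
have := syt_key_mono S_syt S_des lt_cd; rewrite !ltn_lexcode ?crow_lt //.
case/orP => [lt_count|/andP[/eqP -> ->]]; last by rewrite eqxx orbT.
by apply/orP; left; have := row0_count_pos S_syt c; lia.
Qed.

Lemma ssyt_of_sytK : syt_of_ssyt (ssyt_of_syt S) = S.
Proof.
apply/ffunP => c; apply: val_inj; rewrite /= syt_of_ssyt_val.
rewrite -(rank_ord c (syt_inj S_syt) card_cells_lam); apply: eq_card => d; rewrite !inE.
apply/idP/idP => [lt_key|/ssyt_key_ssyt_of_syt_lt //].
case: (ltngtP (S d) (S c)) => // [/ssyt_key_ssyt_of_syt_lt|/val_inj/(syt_inj S_syt) eq_dc].
  by rewrite ltnNge (ltnW lt_key).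
by move: lt_key; rewrite eq_dc ltnn.
Qed.

Lemma ssyt_of_syt_is_ssyt : is_ssyt (ssyt_of_syt S).
Proof.
apply/forallP => x; apply/forallP => y; rewrite !ssyt_of_syt_val.
apply/andP; split; apply/implyP => /andP[/eqP eq_xy lt_xy].
  rewrite -!subn1 leq_sub2r // row0_count_mono // ltnW //.
  by apply: (syt_col_lt S_syt); rewrite ?ccol_tr_cell ?crow_tr_cell ?ltnS.
have lt_S : S (tr_cell x) < S (tr_cell y).
  by apply: (syt_row_lt S_syt); rewrite ?crow_tr_cell ?eq_xy.
have := syt_key_mono S_syt S_des lt_S.
rewrite ltn_lexcode ?crow_lt // !crow_tr_cell eq_xy ltnn andbF orbF.
by have := row0_count_pos S_syt (tr_cell x); lia.
Qed.

End MaxDescentTableau.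

End Bijection.

Local Open Scope ring_scope.

Theorem mainTheorem7 (beta : seq nat) (k : nat) :
  is_partition beta ->
  (nth 0%N (conj_part beta) 0 <= k)%N ->
  'X^('C(sumn beta + 1, 2)) *
    schur_eval (R := {poly int}) beta (fun j : 'I_k => 'X^j)
  = f_poly (k :: conj_part beta) (sumn beta).
Proof.
move=> beta_part k_ge_rows; rewrite /schur_eval /f_poly mulr_sumr.
rewrite (reindex_onto (syt_of_ssyt beta_part k_ge_rows) (ssyt_of_syt beta_part k_ge_rows)) /=.
  apply: eq_big => [T|T T_ssyt]; last by rewrite prodrXr -exprD maj_syt_of_ssyt // addn1.
  apply/idP/idP => [T_ssyt|/andP[/andP[S_syt /eqP S_des] /eqP <-]].
    by rewrite syt_of_ssyt_is_syt // des_syt_of_ssyt // syt_of_ssytK // !eqxx.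
  exact: ssyt_of_syt_is_ssyt.
by move=> S /andP[S_syt /eqP S_des]; apply: ssyt_of_sytK.
Qed.
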